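(* Let $\epsilon>0$ be a constant. There exists a constant $\delta>0$ such that, for all sufficiently large $n$, if $V\subseteq\mathbb{Z}_2^{2n}$ is a uniformly random subspace of dimension $m\ge\epsilon n$, then $\Pr[V\subseteq V^\perp]\le2^{-\delta n^2}$.
   Context: Symplectic inner product on $\mathbb{Z}_2^{2n}$: $(\mathbf a,\mathbf b)\odot(\mathbf a',\mathbf b')=\mathbf a\cdot\mathbf b'+\mathbf a'\cdot\mathbf b\pmod2$. For a subspace $S$, $S^\perp=\{\mathbf v:\mathbf v\odot\mathbf w=0\ \forall\mathbf w\in S\}$ is its symplectic complement; $V\subseteq V^\perp$ means $V$ is isotropic. *)

From mathcomp Require Import all_boot all_algebra.
From Stdlib Require Import Reals.
Set Implicit Arguments. Unset Strict Implicit. Unset Printing Implicit Defensive.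
Import GRing.Theory.
Local Open Scope ring_scope.

(* Vectors of Z_2^{2n} are row vectors 'rV['F_2]_(n + n); the first n
   coordinates are a, the last n are b, for v = (a, b). *)
Definition symp (n : nat) (u v : 'rV['F_2]_(n + n)) : 'F_2 :=
  \sum_(i < n) (u 0 (lshift n i) * v 0 (rshift n i)
               + v 0 (lshift n i) * u 0 (rshift n i)).

(* Subspaces of 'rV_k are represented canonically by square matrices U with
   <<U>> = U (mxalgebra's canonical generator of a row space); the vectors of
   the subspace are the rows v with (v <= U)%MS, and its dimension is \rank U. *)
Definition subspace_vecs (k : nat) (U : 'M['F_2]_k) : {set 'rV['F_2]_k} :=
  [set v : 'rV['F_2]_k | (v <= U)%MS].

Definition subspaces_of_dim (k m : nat) : {set 'M['F_2]_k} :=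
  [set U : 'M['F_2]_k | (<<U>>%MS == U) && (\rank U == m)].

Definition symp_perp (n : nat) (S : {set 'rV['F_2]_(n + n)}) : {set 'rV['F_2]_(n + n)} :=
  [set v | [forall w in S, symp v w == 0]].

Definition isotropic (n : nat) (U : 'M['F_2]_(n + n)) : bool :=
  subspace_vecs U \subset symp_perp (subspace_vecs U).

Definition prob_isotropic (n m : nat) : R :=
  (INR #|[set U in subspaces_of_dim (n + n) m | isotropic U]|
   / INR #|subspaces_of_dim (n + n) m|)%R.

(* Count frames (row-free m x 2n matrices, i.e. ordered bases) instead of
   subspaces: all m-dimensional subspaces have equally many frames, so the
   probability is the proportion of frames M with M J M^T = 0, J the symplectic
   form.  Splitting M into its first k rows A and last l = m - k rows B,
   isotropy puts B into the (2n - k)-dimensional orthogonal of the rows of A,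
   so there are at most 2^(2nk + l(2n - k)) isotropic frames; a union bound over
   kernel vectors shows there are at least 2^(2n(m - 1)) frames.  Hence the
   probability is at most 2^(2n - kl), and k = floor(m/2) gives
   4kl >= m^2 - 1 >= eps^2 n^2 - 1. *)

(* Reals must come first: imported after ssrnat it rebinds the %N delimiter. *)
From Stdlib Require Import Reals Lra Psatz.
From mathcomp Require Import all_boot all_algebra zify.
Set Implicit Arguments. Unset Strict Implicit. Unset Printing Implicit Defensive.
Import GRing.Theory.

Lemma row_free_usubmx (F : fieldType) k l N (M : 'M[F]_(k + l, N)) :
  row_free M -> row_free (usubmx M).
Proof.
rewrite /row_free => /eqP rankM; rewrite eqn_leq rank_leq_row -(leq_add2r l) -{1}rankM.
rewrite -{1}(vsubmxK M) -addsmxE; apply: leq_trans (mxrank_adds_leqif _ _).1 _.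
by rewrite leq_add2l rank_leq_row.
Qed.

Section FrameCounting.
Local Open Scope ring_scope.
Variable F : finFieldType.
Local Notation q := #|F|.

Lemma card_submx N l r (K : 'M[F]_(r, N)) :
  #|[set B : 'M[F]_(l, N) | (B <= K)%MS]| = (q ^ (l * \rank K))%N.
Proof.
have -> : [set B : 'M[F]_(l, N) | (B <= K)%MS] =
          [set X *m row_base K | X in [set: 'M[F]_(l, \rank K)]].
  apply/setP => B; rewrite inE; apply/idP/imsetP => [|[X _ ->]].
    by rewrite -(eq_row_base K) => /submxP[X ->]; exists X; rewrite ?inE.
  by rewrite -(eq_row_base K) submxMl.
by rewrite card_imset ?cardsT ?card_mx //; apply/row_free_inj/row_base_free.
Qed.

Lemma card_ker_mx N l k (A : 'M[F]_(N, k)) :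
  #|[set B : 'M[F]_(l, N) | B *m A == 0]| = (q ^ (l * (N - \rank A)))%N.
Proof.
by rewrite -mxrank_ker -card_submx; apply: eq_card => B; rewrite !inE sub_kermx.
Qed.

Lemma card_left_ker_row N m (x : 'rV[F]_m) : x != 0 ->
  #|[set M : 'M[F]_(m, N) | x *m M == 0]| = (q ^ (N * (m - 1)))%N.
Proof.
move=> x_neq0; have rank_x : \rank x = 1%N.
  by apply/eqP; rewrite eqn_leq rank_leq_row lt0n mxrank_eq0.
have -> : (m - 1)%N = (m - \rank x^T)%N by rewrite mxrank_tr rank_x.
rewrite -card_ker_mx -(card_imset _ (@trmx_inj _ _ _)).
apply: eq_card => B; rewrite inE; apply/imsetP/eqP => [[M] | BxT0].
  by rewrite inE => /eqP xM0 ->; rewrite -trmx_mul xM0 trmx0.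
by exists B^T; rewrite ?trmxK // inE -[x]trmxK -trmx_mul BxT0 trmx0.
Qed.

Lemma card_not_row_free N m :
  (#|[set M : 'M[F]_(m, N) | ~~ row_free M]|
   <= (q ^ m - 1) * q ^ (N * (m - 1)))%N.
Proof.
have nonfree_ker (M : 'M[F]_(m, N)) :
    ~~ row_free M -> exists x : 'rV[F]_m, (x != 0) && (x *m M == 0).
  rewrite -kermx_eq0 => /rowV0Pn[x x_ker x_neq0].
  by exists x; rewrite x_neq0 -sub_kermx.
rewrite -sum1dep_card; apply: (@leq_trans
  (\sum_(M : 'M[F]_(m, N) | ~~ row_free M)
     \sum_(x : 'rV[F]_m | (x != 0%R) && (x *m M == 0%R)) 1)%N).
  apply: leq_sum => M /nonfree_ker[x x_ker].
  by rewrite sum1dep_card card_gt0; apply/set0Pn; exists x; rewrite inE.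
rewrite (exchange_big_dep (fun x : 'rV[F]_m => x != 0)) /=; last by move=> M x _ /andP[].
have <- : #|predC1 (0 : 'rV[F]_m)| = (q ^ m - 1)%N by rewrite cardC1 card_mx mul1n subn1.
rewrite -sum_nat_const; apply: leq_sum => x x_neq0.
rewrite -(card_left_ker_row N x_neq0) sum1dep_card subset_leq_card //.
by apply/subsetP => M; rewrite !inE => /and3P[].
Qed.

Lemma card_row_free_ge N m : (0 < m <= N)%N ->
  (q ^ (N * (m - 1)) <= #|[set M : 'M[F]_(m, N) | row_free M]|)%N.
Proof.
case/andP=> m_gt0 le_mN; have q_gt0 : (0 < q)%N := ltnW (card_finNzRing_gt1 F).
have card_split : (#|[set M : 'M[F]_(m, N) | row_free M]|
                    + #|[set M : 'M[F]_(m, N) | ~~ row_free M]|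
                   = q ^ N * q ^ (N * (m - 1)))%N.
  have -> : (N * (m - 1) = m * N - N)%N by nia.
  rewrite -expnD subnKC ?leq_pmull // -card_mx.
  rewrite -(cardsC [set M : 'M[F]_(m, N) | row_free M]).
  by congr (_ + _)%N; apply: eq_card => M; rewrite !inE.
set X := (q ^ (N * (m - 1)))%N in card_split *.
have nonfree_le := card_not_row_free N m; rewrite -/X mulnBl mul1n in nonfree_le.
have : (q ^ m * X <= q ^ N * X)%N by rewrite leq_mul2r leq_pexp2l ?orbT.
have : (X <= q ^ m * X)%N by rewrite leq_pmull // expn_gt0 q_gt0.
move: (q ^ m * X)%N (q ^ N * X)%N card_split nonfree_le => QmX QNX; lia.
Qed.

Definition frames N m (U : 'M[F]_N) :=
  [set M : 'M[F]_(m, N) | row_free M && (<<M>>%MS == U)].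

Lemma eqmx_pid_row_ebase N (U : 'M[F]_N) :
  (U :=: (pid_mx (\rank U) : 'M_N) *m row_ebase U)%MS.
Proof.
rewrite -{1}(mulmx_ebase U) -mulmxA; apply: eqmxMfull.
by rewrite row_full_unit col_ebase_unit.
Qed.

Lemma card_frames_le N m (U V : 'M[F]_N) :
  \rank U = \rank V -> <<V>>%MS = V -> (#|frames m U| <= #|frames m V|)%N.
Proof.
move=> rankUV genV; set P := invmx (row_ebase U) *m row_ebase V.
have P_free : row_free P by rewrite row_free_unit unitmx_mul unitmx_inv !row_ebase_unit.
rewrite -(card_imset _ (row_free_inj P_free)); apply/subset_leq_card/subsetP.
move=> _ /imsetP[M + ->]; rewrite !inE => /andP[M_free /eqP genM].
rewrite /row_free mxrankMfree // -/(row_free M) M_free /= -{1}genV; apply/eqP/genmxP.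
have eqMU : (M :=: U)%MS by rewrite -genM; exact: eqmx_sym (genmxE M).
apply/eqmxP; apply: eqmx_trans (eqmxMr P eqMU) _.
apply: eqmx_trans (eqmxMr P (eqmx_pid_row_ebase U)) _.
rewrite /P mulmxA mulmxK ?row_ebase_unit // rankUV; exact/eqmx_sym/eqmx_pid_row_ebase.
Qed.

Lemma card_frames_eq N m (U V : 'M[F]_N) : <<U>>%MS = U -> <<V>>%MS = V ->
  \rank U = \rank V -> #|frames m U| = #|frames m V|.
Proof.
by move=> genU genV rankUV; apply/eqP; rewrite eqn_leq !card_frames_le.
Qed.

Lemma card_row_free_sum_frames N m (Q : pred 'M[F]_N) :
  #|[set M : 'M[F]_(m, N) | row_free M && Q <<M>>%MS]| =
  (\sum_(U | (<<U>>%MS == U) && (\rank U == m) && Q U) #|frames m U|)%N.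
Proof.
rewrite -sum1dep_card (partition_big (fun M : 'M[F]_(m, N) => <<M>>%MS)
  (fun U => (<<U>>%MS == U) && (\rank U == m) && Q U)) => [|M /andP[M_free QM]]; last first.
  by rewrite genmx_id mxrank_gen eqxx QM andbT; exact: M_free.
apply: eq_bigr => U /andP[_ QU]; rewrite sum1dep_card; apply: eq_card => M.
by rewrite !inE; case: eqP => [->|]; rewrite ?QU ?andbT ?andbF.
Qed.

Lemma card_row_free_ratio N m (Q : pred 'M[F]_N) :
  (#|[set M : 'M[F]_(m, N) | row_free M && Q <<M>>%MS]|
     * #|[set U : 'M[F]_N | (<<U>>%MS == U) && (\rank U == m)]| =
   #|[set U : 'M[F]_N | (<<U>>%MS == U) && (\rank U == m) && Q U]|
     * #|[set M : 'M[F]_(m, N) | row_free M]|)%N.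
Proof.
have [U0 /andP[/eqP genU0 /eqP rankU0] | noS] :=
  pickP (fun U : 'M[F]_N => (<<U>>%MS == U) && (\rank U == m)); last first.
  rewrite (@eq_card0 _ [set U | _ && _ && Q U]) => [|U]; last by rewrite !inE noS.
  by rewrite (@eq_card0 _ [set U : 'M[F]_N | _ && _]) ?muln0 // => U; rewrite !inE noS.
have frames_U0 (P : pred 'M[F]_N) U :
    (<<U>>%MS == U) && (\rank U == m) && P U -> #|frames m U| = #|frames m U0|.
  by case/andP=> /andP[/eqP genU /eqP rankU] _; rewrite (card_frames_eq m genU genU0) ?rankU.
have -> : [set M : 'M[F]_(m, N) | row_free M] = [set M | row_free M && predT <<M>>%MS].
  by apply/setP => M; rewrite !inE andbT.
rewrite !card_row_free_sum_frames (eq_bigr _ (frames_U0 _)) sum_nat_const.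
rewrite (eq_bigr _ (frames_U0 _)) sum_nat_const mulnAC mulnA; congr (_ * _ * _)%N.
  by apply: eq_card => U; rewrite !inE.
by apply: eq_card => U; rewrite inE unfold_in /= andbT.
Qed.
End FrameCounting.

Section SymplecticFrames.
Local Open Scope ring_scope.
Variable n : nat.

Definition symp_form : 'M['F_2]_(n + n) := block_mx 0 1%:M 1%:M 0.

Lemma sympE (u v : 'rV['F_2]_(n + n)) : symp u v = (u *m symp_form *m v^T) 0 0.
Proof.
rewrite /symp /symp_form -[in RHS](hsubmxK u) -[in RHS](hsubmxK v).
rewrite mul_row_block !mulmx0 !mulmx1 add0r addr0 tr_row_mx mul_row_col.
rewrite !mxE big_split /= addrC; congr (_ + _); apply: eq_bigr => i _; rewrite !mxE //.
by rewrite mulrC.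
Qed.

Lemma symp_form_unit : symp_form \in unitmx.
Proof.
suff /mulmx1_unit[] : symp_form *m symp_form = 1%:M by [].
by rewrite mulmx_block !mulmx0 !mulmx1 !addr0 !add0r -scalar_mx_block.
Qed.

Lemma symp_form_mxE k l (B : 'M['F_2]_(l, n + n)) (A : 'M['F_2]_(k, n + n)) i j :
  (B *m symp_form *m A^T) i j = symp (row i B) (row j A).
Proof.
by rewrite sympE -!row_mul tr_row !mxE; apply: eq_bigr => t _; rewrite !mxE.
Qed.

Lemma symp_form_mx_eq0 k l (B : 'M['F_2]_(l, n + n)) (A : 'M['F_2]_(k, n + n)) :
  (B *m symp_form *m A^T == 0) = [forall i, forall j, symp (row i B) (row j A) == 0].
Proof.
apply/eqP/forallP => [BA0 i | BA0].
  by apply/forallP => j; rewrite -symp_form_mxE BA0 mxE.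
by apply/matrixP => i j; rewrite symp_form_mxE mxE; apply/eqP/(forallP (BA0 i)).
Qed.

Lemma card_symp_orth k l (A : 'M['F_2]_(k, n + n)) : row_free A ->
  #|[set B : 'M['F_2]_(l, n + n) | B *m symp_form *m A^T == 0]|
  = (2 ^ (l * (n + n - k)))%N.
Proof.
move=> A_free; have rank_JAT : \rank (symp_form *m A^T) = k.
  rewrite -mxrank_tr trmx_mul trmxK mxrankMfree; first exact/eqP.
  by rewrite row_free_unit unitmx_tr symp_form_unit.
rewrite -[X in (_ - X)%N]rank_JAT -[X in (X ^ _)%N](@card_Fp 2) // -card_ker_mx.
by apply: eq_card => B; rewrite !inE mulmxA.
Qed.

Lemma isotropic_genmx m (M : 'M['F_2]_(m, n + n)) :
  isotropic <<M>>%MS -> M *m symp_form *m M^T == 0.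
Proof.
move/subsetP => iso; rewrite symp_form_mx_eq0; apply/forallP => i; apply/forallP => j.
have row_in t : row t M \in subspace_vecs <<M>>%MS by rewrite inE genmxE row_sub.
by move: (iso _ (row_in i)); rewrite inE => /forall_inP; apply; apply: row_in.
Qed.

Lemma card_isotropic_frames_le k l :
  (#|[set M : 'M['F_2]_(k + l, n + n) | row_free M && (M *m symp_form *m M^T == 0%R)]|
   <= 2 ^ (k * (n + n)) * 2 ^ (l * (n + n - k)))%N.
Proof.
rewrite -sum1dep_card (partition_big (@usubmx _ k l _) predT) //=.
rewrite -[X in (X ^ _)%N](@card_Fp 2) // -card_mx -sum_nat_const; apply: leq_sum => A _.
have [A_free | A_nfree] := boolP (row_free A); last first.
  rewrite big_pred0 // => M; apply/negP => /andP[/andP[M_free _] /eqP uM].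
  by rewrite -uM row_free_usubmx in A_nfree.
rewrite -(card_symp_orth l A_free) sum1dep_card -(card_in_imset (f := @dsubmx _ k l _)).
  apply/subset_leq_card/subsetP => _ /imsetP[M + ->]; rewrite !inE.
  case/andP=> /andP[_ isoM] /eqP <-; move: isoM; rewrite !symp_form_mx_eq0.
  move=> /forallP isoM; apply/forallP => i; apply/forallP => j.
  by rewrite row_dsubmx row_usubmx; apply: (forallP (isoM _)).
move=> M1 M2; rewrite !inE => /andP[_ /eqP uM1] /andP[_ /eqP uM2] dM12.
by rewrite -(vsubmxK M1) -(vsubmxK M2) uM1 uM2 dM12.
Qed.

End SymplecticFrames.

Lemma card_isotropic_subspaces_le n k l : (0 < k + l <= n + n)%N ->
  (#|[set U in subspaces_of_dim (n + n) (k + l) | isotropic U]| * 2 ^ (k * l)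
   <= 2 ^ (n + n) * #|subspaces_of_dim (n + n) (k + l)|)%N.
Proof.
move=> m_bounds; have rf_ge := card_row_free_ge 'F_2 m_bounds; rewrite card_Fp // in rf_ge.
set rf := #|[set M | row_free M]| in rf_ge.
have rf_gt0 : (0 < rf)%N by apply: leq_trans rf_ge; rewrite expn_gt0.
have iso_frames_le :
    (#|[set M : 'M['F_2]_(k + l, n + n) | row_free M && isotropic <<M>>%MS]|
     <= 2 ^ (k * (n + n)) * 2 ^ (l * (n + n - k)))%N.
  apply: leq_trans (card_isotropic_frames_le n k l); apply/subset_leq_card/subsetP => M.
  by rewrite !inE => /andP[-> /isotropic_genmx].
have -> : [set U in subspaces_of_dim (n + n) (k + l) | isotropic U] =
          [set U | (<<U>>%MS == U) && (\rank U == k + l)%N && isotropic U].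
  by apply/setP => U; rewrite !inE.
rewrite -(leq_pmul2r rf_gt0) mulnAC -card_row_free_ratio [X in (_ <= X)%N]mulnAC.
rewrite mulnAC leq_mul2r; apply/orP; right.
apply: leq_trans (leq_mul iso_frames_le (leqnn _)) _.
apply: leq_trans _ (leq_mul (leqnn _) rf_ge).
by rewrite -!expnD leq_exp2l //; nia.
Qed.

Lemma subspaces_of_dim_gt0 N m : (m <= N)%N -> (0 < #|subspaces_of_dim N m|)%N.
Proof.
move=> le_mN; apply/card_gt0P; exists <<pid_mx m : 'M['F_2]_N>>%MS.
by rewrite inE genmx_id eqxx mxrank_gen rank_pid_mx // eqxx.
Qed.

Lemma sqrn_le_half_uphalf m : (m * m <= 4 * (m./2 * uphalf m) + 1)%N.
Proof.
by rewrite uphalf_half -{1 2}(odd_double_half m) -!muln2; case: (odd m) => /=; nia.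
Qed.

Open Scope R_scope.

Lemma INR_expn2 e : INR (2 ^ e)%N = 2 ^ e.
Proof. by elim: e => // e IH; rewrite expnS -multE mult_INR IH /=; ring. Qed.

Lemma prob_isotropic_le n k l : (0 < k + l <= n + n)%N ->
  prob_isotropic n (k + l) <= Rpower 2 (INR (n + n) - INR (k * l)).
Proof.
move=> m_bounds; rewrite /prob_isotropic.
set I := INR #|[set U in _ | _]|; set S := INR #|subspaces_of_dim _ _|.
have S_gt0 : 0 < S.
  by apply/lt_0_INR/ltP/subspaces_of_dim_gt0; case/andP: m_bounds.
have card_le : I * 2 ^ (k * l) <= 2 ^ (n + n) * S.
  have /leP/le_INR := card_isotropic_subspaces_le m_bounds.
  by rewrite -!multE !mult_INR !INR_expn2.
have pow_gt0 : 0 < 2 ^ (k * l) by apply: pow_lt; lra.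
rewrite Rpower_plus Rpower_Ropp !Rpower_pow; try lra.
apply: (Rmult_le_reg_r (S * 2 ^ (k * l))); first exact: Rmult_lt_0_compat.
rewrite (_ : I / S * _ = I * 2 ^ (k * l)); last by field; lra.
by rewrite (_ : _ * / _ * _ = 2 ^ (n + n) * S); last by field; lra.
Qed.

Lemma quadratic_exponent_le eps x y p : 0 < eps -> 18 / eps ^ 2 + 1 < x ->
  eps * x <= y -> y * y <= 4 * p + 1 -> x + x - p <= - (eps ^ 2 / 8 * x ^ 2).
Proof.
move=> eps_gt0 x_large eps_y sqr_y.
have x_gt1 : 1 < x.
  have : 0 < 18 / eps ^ 2 by apply: Rdiv_lt_0_compat; nra.
  lra.
have eps2_x : 18 < eps ^ 2 * x.
  have : eps ^ 2 * (18 / eps ^ 2 + 1) < eps ^ 2 * x by apply: Rmult_lt_compat_l; nra.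
  by rewrite (_ : eps ^ 2 * _ = 18 + eps ^ 2); [nra | field; lra].
have : eps * x * (eps * x) <= y * y by apply: Rmult_le_compat => //; nra.
have : 18 * x < eps ^ 2 * x * x by nra.
nra.
Qed.

Theorem lemmaD4 :
  forall eps : R, 0 < eps ->
  exists delta : R, 0 < delta /\
  exists N : nat, forall n m : nat,
    (N <= n)%nat -> eps * INR n <= INR m -> (m <= n + n)%nat ->
    prob_isotropic n m <= Rpower 2 (- (delta * INR n ^ 2)).
Proof.
move=> eps eps_gt0; exists (eps ^ 2 / 8); split; first by nra.
have [N N_large] := INR_unbounded (18 / eps ^ 2 + 1).
exists N => n m le_Nn eps_m le_m2n.
have n_large : 18 / eps ^ 2 + 1 < INR n.
  exact: Rlt_le_trans N_large (le_INR _ _ (leP le_Nn)).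
have m_gt0 : (0 < m)%N.
  have : 0 < 18 / eps ^ 2 by apply: Rdiv_lt_0_compat; nra.
  by move=> ?; apply/ltP/INR_lt; rewrite /=; nra.
have m_split : m = (m./2 + uphalf m)%N by rewrite uphalf_half addnCA addnn odd_double_half.
rewrite {1}m_split; apply: Rle_trans (prob_isotropic_le _) _; first by rewrite -m_split m_gt0.
apply: Rle_Rpower; first lra.
rewrite -plusE plus_INR; apply: (quadratic_exponent_le (y := INR m)) => //.
have /leP/le_INR := sqrn_le_half_uphalf m.
rewrite -!plusE -!multE !plus_INR !mult_INR /=; lra.
Qed.
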